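(* Let $(\mathcal X,d)$ be a clustering instance in a metric space $M$ and let $\gamma\ge 3$. Then the standard single-linkage algorithm on $(\mathcal X,d)$ outputs a tree $\mathcal T$ such that every $k$-clustering $\mathcal C^*=\{C_1^*,\dots,C_k^*\}$ of $\mathcal X$ that satisfies the $\gamma$-margin property (with centers $\mu_1,\dots,\mu_k\in M$) is a pruning of $\mathcal T$; i.e., for every $1\le i\le k$ there is a node $N_i$ of $\mathcal T$ with $C_i^*=N_i$.
   Context: Single linkage starts with all singletons of $\mathcal X$ and repeatedly merges the two current clusters $A,B$ minimizing $\min_{a\in A,b\in B}d(a,b)$ until one cluster remains; the tree $\mathcal T$ has as nodes all clusters formed (leaves are singletons, each merge creates a parent of the two merged nodes). A clustering with centers $\mu_1,\dots,\mu_k\in M$ is center-based if $x\in C_i\iff i=\arg\min_j d(x,\mu_j)$, and satisfies the $\gamma$-margin property if for all $i$, every $x\in C_i$, $y\in\mathcal X\setminus C_i$: $\gamma d(x,\mu_i)<d(y,\mu_i)$. *)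

From HB Require Import structures.
From mathcomp Require Import all_boot all_order all_algebra.
Set Implicit Arguments. Unset Strict Implicit. Unset Printing Implicit Defensive.
Import Order.TTheory GRing.Theory Num.Theory.
Local Open Scope ring_scope.

Section SL.
Variables (R : realFieldType) (M : Type) (d : M -> M -> R).

Definition is_metric : Prop :=
  [/\ forall x y, 0 <= d x y,
      forall x y, d x y = 0 <-> x = y,
      forall x y, d x y = d y x
    & forall x y z, d x z <= d x y + d y z].

(* The clustering instance is a finite subset of M, given as a finite type
   X together with an injective embedding emb : X -> M. *)
Variables (X : finType) (emb : X -> M).

Definition dX (x y : X) : R := d (emb x) (emb y).

(* single-linkage distance of (A,B) is <= that of (A',B'), for nonempty A, B:
   min_{a in A, b in B} d a b <= min_{a' in A', b' in B'} d a' b' *)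
Definition linkage_le (A B A' B' : {set X}) : Prop :=
  exists a b, [/\ a \in A, b \in B &
    forall a' b', a' \in A' -> b' \in B' -> dX a b <= dX a' b'].

Definition sl_step (P Q : {set {set X}}) : Prop :=
  exists A B, [/\ A \in P, B \in P, A != B,
    (forall A' B', A' \in P -> B' \in P -> A' != B' -> linkage_le A B A' B')
  & Q = (A :|: B) |: ((P :\ A) :\ B)].

Fixpoint sl_path (P : {set {set X}}) (s : seq {set {set X}}) : Prop :=
  match s with
  | [::] => True
  | Q :: s' => sl_step P Q /\ sl_path Q s'
  end.

Definition singletons : {set {set X}} := [set [set x] | x : X].

Definition single_linkage_run (s : seq {set {set X}}) : Prop :=
  sl_path singletons s /\ (#|last singletons s| <= 1)%N.

(* Nodes of the tree: all clusters ever formed during the run. *)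
Definition sl_node (s : seq {set {set X}}) (N : {set X}) : Prop :=
  exists2 P, P \in singletons :: s & N \in P.

Definition k_clustering (k : nat) (C : 'I_k -> {set X}) : Prop :=
  [/\ forall i, C i != set0,
      forall i j, i != j -> [disjoint C i & C j]
    & forall x, exists i, x \in C i].

Definition center_based (k : nat) (C : 'I_k -> {set X}) (mu : 'I_k -> M) : Prop :=
  forall x i, x \in C i <-> (forall j, j != i -> d (emb x) (mu i) < d (emb x) (mu j)).

Definition gamma_margin (gamma : R) (k : nat) (C : 'I_k -> {set X})
  (mu : 'I_k -> M) : Prop :=
  forall i x y, x \in C i -> y \notin C i ->
    gamma * d (emb x) (mu i) < d (emb y) (mu i).

End SL.

From HB Require Import structures.
From mathcomp Require Import all_boot all_order all_algebra.
From mathcomp Require Import lra.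
Set Implicit Arguments. Unset Strict Implicit. Unset Printing Implicit Defensive.
Import Order.TTheory GRing.Theory Num.Theory.
Local Open Scope ring_scope.

(** With gamma >= 3 the margin property makes each cluster S strictly
   separated: every point of S is closer to every other point of S than to
   any point outside S.  Single linkage then never merges a proper part of S
   with a cluster outside S, because the rest of S is strictly closer.  Hence
   every current cluster stays either inside S or disjoint from it, and since
   the run ends with a single cluster, S itself must appear as a node. *)

Section SingleLinkage.
Variables (R : realFieldType) (M : Type) (d : M -> M -> R)
  (X : finType) (emb : X -> M).

Local Notation dist := (dX d emb).

Definition strictly_separated (S : {set X}) : Prop :=
  forall x y z, x \in S -> y \in S -> z \notin S -> dist x y < dist x z.

Definition covers (P : {set {set X}}) : Prop :=
  forall x, exists2 A, A \in P & x \in A.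

Definition laminar_with (S : {set X}) (P : {set {set X}}) : Prop :=
  forall A, A \in P -> A \subset S \/ [disjoint A & S].

Definition min_linkage (P : {set {set X}}) (A B : {set X}) : Prop :=
  forall A' B', A' \in P -> B' \in P -> A' != B' -> linkage_le d emb A B A' B'.

Lemma margin_separated (gamma : R) (S : {set X}) (c : M) :
  is_metric d -> 3 <= gamma ->
  (forall x y, x \in S -> y \notin S -> gamma * d (emb x) c < d (emb y) c) ->
  strictly_separated S.
Proof.
move=> [d_ge0 _ d_sym d_tri] gamma_ge3 margin x y z xS yS zS; rewrite /dX.
have xz := margin x z xS zS; have yz := margin y z yS zS.
have xy_le := d_tri (emb x) c (emb y); rewrite (d_sym c) in xy_le.
have zx_le := d_tri (emb z) (emb x) c; rewrite (d_sym (emb z) (emb x)) in zx_le.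
(* d(z,c) > 3 d(x,c) and > 3 d(y,c), so d(z,c) > 2 d(x,c) + d(y,c);
   the triangle inequality through c on both sides gives d(x,y) < d(x,z). *)
have x3 : 3 * d (emb x) c <= gamma * d (emb x) c by rewrite ler_wpM2r.
have y3 : 3 * d (emb y) c <= gamma * d (emb y) c by rewrite ler_wpM2r.
have := d_ge0 (emb x) c; have := d_ge0 (emb y) c; lra.
Qed.

Lemma linkage_leC (A B A' B' : {set X}) :
  (forall u v, d u v = d v u) ->
  linkage_le d emb A B A' B' -> linkage_le d emb B A B' A'.
Proof.
move=> d_sym [a [b [aA bB ab_min]]]; exists b, a; split=> // b' a' b'B a'A.
by rewrite /dX d_sym (d_sym (emb b')); exact: ab_min.
Qed.

Lemma covers_singletons : covers (singletons X).
Proof. by move=> x; exists [set x]; [apply/imsetP; exists x | rewrite inE]. Qed.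

Lemma laminar_singletons (S : {set X}) : laminar_with S (singletons X).
Proof.
move=> _ /imsetP [x _ ->]; case xS: (x \in S).
  by left; rewrite sub1set.
by right; rewrite disjoints1 xS.
Qed.

Lemma sl_step_covers (P Q : {set {set X}}) :
  sl_step d emb P Q -> covers P -> covers Q.
Proof.
move=> [A [B [_ _ _ _ ->]]] cov x; have [E EP xE] := cov x.
have [EA | nEA] := eqVneq E A; first by exists (A :|: B); rewrite ?inE ?eqxx -?EA ?xE.
have [EB | nEB] := eqVneq E B.
  by exists (A :|: B); rewrite ?inE ?eqxx -?EB ?xE ?orbT.
by exists E; rewrite // !inE nEA nEB EP !orbT.
Qed.

Lemma min_linkage_not_leaving (S : {set X}) (P : {set {set X}}) (A B : {set X}) :
  strictly_separated S -> covers P -> A \in P -> A \subset S -> ~~ (S \subset A) ->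
  [disjoint B & S] -> ~ min_linkage P A B.
Proof.
move=> sepS cov AP AS /subsetPn [y yS yA] BS minAB.
have [D DP yD] := cov y.
have nAD : A != D by apply: contraNneq yA => ->.
have [a [b [aA bB ab_min]]] := minAB A D AP DP nAD.
have := sepS a y b (subsetP AS a aA) yS (negbT (disjointFr BS bB)).
by rewrite ltNge ab_min.
Qed.

Lemma sl_step_laminar (S : {set X}) (x0 : X) (P Q : {set {set X}}) :
  (forall u v, d u v = d v u) -> x0 \in S -> strictly_separated S ->
  S \notin P -> covers P -> laminar_with S P -> sl_step d emb P Q ->
  laminar_with S Q.
Proof.
move=> d_sym x0S sepS SnP cov lam [A [B [AP BP nAB minAB ->]]].
have not_super E : E \in P -> ~~ (S \subset E).
  move=> EP; apply/negP=> SE; case: (lam E EP) => [ES | /disjointFr ES].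
    by move: SnP; rewrite -(eqP (_ : E == S)) ?EP // eqEsubset ES SE.
  by have := ES x0 (subsetP SE x0 x0S); rewrite x0S.
move=> E; rewrite !inE => /orP [/eqP -> | /andP [_ /andP [_ EP]]]; last exact: lam.
case: (lam A AP) => AS; case: (lam B BP) => BS.
- by left; rewrite subUset AS BS.
- by case: (min_linkage_not_leaving sepS cov AP AS (not_super A AP) BS minAB).
- case: (min_linkage_not_leaving sepS cov BP BS (not_super B BP) AS).
  by move=> A' B' A'P B'P nA'B'; apply/linkage_leC/minAB; rewrite // eq_sym.
- by right; rewrite -setI_eq0 setIUl setU_eq0 !setI_eq0 AS BS.
Qed.

Lemma laminar_card_le1 (S : {set X}) (x0 : X) (P : {set {set X}}) :
  x0 \in S -> covers P -> (#|P| <= 1)%N -> laminar_with S P -> S \in P.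
Proof.
move=> x0S cov /card_le1_eqP P_le1 lam; have [A AP x0A] := cov x0.
suff -> : S = A by [].
apply/eqP; rewrite eqEsubset; apply/andP; split.
  by apply/subsetP=> y _; have [E EP yE] := cov y; rewrite -(P_le1 A E AP EP).
by case: (lam A AP) => // /disjointFr AS; rewrite (AS x0) in x0S.
Qed.

Lemma sl_path_forms (S : {set X}) (x0 : X) :
  (forall u v, d u v = d v u) -> x0 \in S -> strictly_separated S ->
  forall s P, sl_path d emb P s -> (#|last P s| <= 1)%N ->
  covers P -> laminar_with S P -> exists2 Q, Q \in P :: s & S \in Q.
Proof.
move=> d_sym x0S sepS; elim=> [|Q s IH] P /=.
  move=> _ P_le1 cov lam; exists P; first by rewrite inE.
  exact: laminar_card_le1 x0S cov P_le1 lam.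
move=> [stepPQ pathQ] last_le1 cov lam.
have [SP | SnP] := boolP (S \in P); first by exists P; rewrite ?inE ?eqxx.
have [Q' Q'in SQ'] := IH Q pathQ last_le1 (sl_step_covers stepPQ cov)
  (sl_step_laminar d_sym x0S sepS SnP cov lam stepPQ).
by exists Q'; rewrite // inE Q'in orbT.
Qed.

End SingleLinkage.

Theorem theorem7 (R : realFieldType) (M : Type) (d : M -> M -> R)
  (X : finType) (emb : X -> M) (gamma : R) :
  is_metric d -> injective emb -> 3 <= gamma ->
  forall s : seq {set {set X}}, single_linkage_run d emb s ->
  forall (k : nat) (C : 'I_k -> {set X}) (mu : 'I_k -> M),
    k_clustering C -> center_based d emb C mu -> gamma_margin d emb gamma C mu ->
    forall i : 'I_k, sl_node s (C i).
Proof.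
move=> d_metric _ gamma_ge3 s [path_s last_le1] k C mu [C_ne _ _] _ margin i.
have [x0 x0C] := set0Pn _ (C_ne i).
have sepC : strictly_separated d emb (C i).
  exact: margin_separated d_metric gamma_ge3 (margin i).
have [_ _ d_sym _] := d_metric.
have [P Pin CP] := sl_path_forms d_sym x0C sepC path_s last_le1
  (@covers_singletons X) (laminar_singletons (C i)).
by exists P.
Qed.
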